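(* Let $L_x,L_y>0$, $L_{xy}\geq 0$, let $F\in\mathcal{F}(L_x, L_y, L_{xy}, 0, 0)$ with nonempty saddle point set $S^\star$, and let $t>0$. Suppose the gradient descent-ascent method with step length $t$ is linearly convergent for any initial point, i.e. there exists $\alpha\in[0,1)$ such that for every $(x^1,y^1)\in\mathbb{R}^n\times\mathbb{R}^m$ the point $x^{2}=x^1-t\nabla_x F(x^1, y^1)$, $y^{2}=y^1+t\nabla_y F(x^1, y^1)$ satisfies $d_{S^\star}^2((x^2,y^2))\leq \alpha\, d_{S^\star}^2((x^1,y^1))$. Then $F$ has a quadratic gradient growth for some $\mu_F>0$.
   Context: $\mathcal{F}(L_x, L_y, L_{xy}, 0, 0)$ denotes the set of differentiable $F:\mathbb{R}^n\times\mathbb{R}^m\to\mathbb{R}$ with $F(\cdot,y)$ convex for all $y$, $F(x,\cdot)$ concave for all $x$, and for all $x,x_1,x_2,y,y_1,y_2$: $\|\nabla_x F(x_2, y)-\nabla_x F(x_1, y)\|\leq L_x\|x_2-x_1\|$; $\|\nabla_y F(x, y_2)-\nabla_y F(x, y_1)\|\leq L_y\|y_2-y_1\|$; $\|\nabla_x F(x, y_2)-\nabla_x F(x, y_1)\|\leq L_{xy}\|y_2-y_1\|$; $\|\nabla_y F(x_2, y)-\nabla_y F(x_1, y)\|\leq L_{xy}\|x_2-x_1\|$. $S^\star$ is the set of saddle points $(x^\star,y^\star)$, i.e. $F(x^\star, y)\leq F(x^\star, y^\star)\leq F(x, y^\star)$ for all $x,y$; it is closed and convex. $d_{S^\star}(z)=\inf_{w\in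 S^\star}\|z-w\|$. $F$ has quadratic gradient growth with $\mu_F>0$ if for all $(x,y)$: $\langle \nabla_x F(x,y), x-x^\star\rangle-\langle \nabla_y F(x,y), y-y^\star\rangle \geq \mu_F\, d_{S^\star}^2((x,y))$, where $(x^\star,y^\star)$ is the Euclidean projection of $(x,y)$ onto $S^\star$. *)

From HB Require Import structures.
From mathcomp Require Import all_boot all_order all_algebra.
From mathcomp Require Import all_classical all_reals all_analysis.
Set Implicit Arguments. Unset Strict Implicit. Unset Printing Implicit Defensive.
Import Order.TTheory GRing.Theory Num.Theory.
Import numFieldNormedType.Exports.
Local Open Scope classical_set_scope.
Local Open Scope ring_scope.

Section Defs.
Variable R : realType.

Definition dotv (k : nat) (u v : 'rV[R]_k) : R := \sum_(i < k) u 0 i * v 0 i.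
Definition enorm (k : nat) (u : 'rV[R]_k) : R := Num.sqrt (dotv u u).

Variables n m : nat.
Implicit Types F : 'rV[R]_n -> 'rV[R]_m -> R.

Definition differentiableF F : Prop :=
  forall z : 'rV[R]_n * 'rV[R]_m, differentiable (fun w : 'rV[R]_n * 'rV[R]_m => F w.1 w.2) z.

Definition gradx F (x : 'rV[R]_n) (y : 'rV[R]_m) : 'rV[R]_n :=
  \row_(i < n) 'D_(delta_mx 0 i) (fun x' : 'rV[R]_n => F x' y) x.
Definition grady F (x : 'rV[R]_n) (y : 'rV[R]_m) : 'rV[R]_m :=
  \row_(j < m) 'D_(delta_mx 0 j) (fun y' : 'rV[R]_m => F x y') y.

Definition convex_fun (k : nat) (f : 'rV[R]_k -> R) : Prop :=
  forall (a b : 'rV[R]_k) (l : R), 0 <= l -> l <= 1 ->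
    f (l *: a + (1 - l) *: b) <= l * f a + (1 - l) * f b.
Definition concave_fun (k : nat) (f : 'rV[R]_k -> R) : Prop :=
  forall (a b : 'rV[R]_k) (l : R), 0 <= l -> l <= 1 ->
    l * f a + (1 - l) * f b <= f (l *: a + (1 - l) *: b).

Definition in_class_F (Lx Ly Lxy : R) F : Prop :=
  differentiableF F /\
  (forall y, convex_fun (fun x => F x y)) /\
  (forall x, concave_fun (fun y => F x y)) /\
  (forall x1 x2 y, enorm (gradx F x2 y - gradx F x1 y) <= Lx * enorm (x2 - x1)) /\
  (forall x y1 y2, enorm (grady F x y2 - grady F x y1) <= Ly * enorm (y2 - y1)) /\
  (forall x y1 y2, enorm (gradx F x y2 - gradx F x y1) <= Lxy * enorm (y2 - y1)) /\
  (forall x1 x2 y, enorm (grady F x2 y - grady F x1 y) <= Lxy * enorm (x2 - x1)).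

Definition saddle_set F : set ('rV[R]_n * 'rV[R]_m) :=
  [set z | forall x y, F z.1 y <= F z.1 z.2 /\ F z.1 z.2 <= F x z.2].

Definition zdist (z w : 'rV[R]_n * 'rV[R]_m) : R :=
  Num.sqrt (dotv (z.1 - w.1) (z.1 - w.1) + dotv (z.2 - w.2) (z.2 - w.2)).

Definition distS (S : set ('rV[R]_n * 'rV[R]_m)) (z : 'rV[R]_n * 'rV[R]_m) : R :=
  inf [set zdist z w | w in S].

Definition is_proj (S : set ('rV[R]_n * 'rV[R]_m)) (z w : 'rV[R]_n * 'rV[R]_m) : Prop :=
  S w /\ zdist z w = distS S z.

Definition gda_step F (t : R) (z : 'rV[R]_n * 'rV[R]_m) : 'rV[R]_n * 'rV[R]_m :=
  (z.1 - t *: gradx F z.1 z.2, z.2 + t *: grady F z.1 z.2).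

Definition quad_grad_growth F (mu : R) : Prop :=
  forall (z p : 'rV[R]_n * 'rV[R]_m), is_proj (saddle_set F) z p ->
    dotv (gradx F z.1 z.2) (z.1 - p.1) - dotv (grady F z.1 z.2) (z.2 - p.2)
      >= mu * (distS (saddle_set F) z) ^+ 2.

End Defs.

From HB Require Import structures.
From mathcomp Require Import all_boot all_order all_algebra.
From mathcomp Require Import all_classical all_reals all_analysis.
From mathcomp Require Import ring lra.
Set Implicit Arguments. Unset Strict Implicit. Unset Printing Implicit Defensive.
Import Order.TTheory GRing.Theory Num.Theory.
Local Open Scope classical_set_scope.
Local Open Scope ring_scope.

(* Write G z = (grad_x F z, - grad_y F z), so that one GDA step is z+ = z - t G z, and let
   p be the projection of z onto the convex set S of saddle points.  Convexity of S gives
   <w - p, z - p> <= 0 for every w in S, hence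
   |z - p|^2 - t <G z, z - p> <= <z+ - w, z - p> <= |z+ - w| |z - p|.
   Taking the infimum over w yields d(z)^2 - t <G z, z - p> <= d(z+) d(z) <= sqrt(alpha) d(z)^2,
   which is quadratic gradient growth with mu = (1 - sqrt alpha) / t. *)

Lemma le0_of_le_mulr (R : realFieldType) (B Q : R) :
  (forall l, 0 < l -> l <= 1 -> B <= l * Q) -> B <= 0.
Proof.
move=> BlQ; rewrite leNgt; apply/negP => B_gt0.
have Q_gt0 : 0 < Q by apply: lt_le_trans B_gt0 _; rewrite -[Q]mul1r BlQ.
pose l := Num.min 1 (B / (2 * Q)).
have l_gt0 : 0 < l by rewrite lt_min ltr01 divr_gt0 ?mulr_gt0.
have lQ : l * Q <= B / 2.
  by rewrite -ler_pdivlMr // ge_min invfM mulrA lexx orbT.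
have l_le1 : l <= 1 by rewrite ge_min lexx.
have := BlQ l l_gt0 l_le1; lra.
Qed.

Lemma le_sqrtM_of_quadratic_ge0 (R : rcfType) (a b B : R) : 0 <= a -> 0 <= b ->
  (forall l, 0 <= a - 2 * l * B + l ^+ 2 * b) -> B <= Num.sqrt a * Num.sqrt b.
Proof.
move=> a_ge0 b_ge0 quad_ge0.
have [b0|b_neq0] := eqVneq b 0.
  rewrite b0 sqrtr0 mulr0 leNgt; apply/negP => B_gt0.
  have := quad_ge0 ((a + 1) / (2 * B)); rewrite b0 mulr0 addr0.
  have -> : 2 * ((a + 1) / (2 * B)) * B = a + 1 by field; rewrite gt_eqF.
  lra.
have b_gt0 : 0 < b by rewrite lt_neqAle eq_sym b_neq0.
have sqrB : B ^+ 2 <= a * b.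
  have := quad_ge0 (B / b).
  have -> : a - 2 * (B / b) * B + (B / b) ^+ 2 * b = (a * b - B ^+ 2) / b.
    by field; rewrite gt_eqF.
  by rewrite pmulr_lge0 ?invr_gt0 // subr_ge0.
apply: le_trans (ler_norm B) _.
by rewrite -sqrtrM // -[`|B|]sqrtr_sqr ler_sqrt // mulr_ge0.
Qed.

Section Dotv.
Variables (R : realType) (k : nat).
Implicit Types u v w : 'rV[R]_k.

Lemma dotvC u v : dotv u v = dotv v u.
Proof. by apply: eq_bigr => i _; rewrite mulrC. Qed.

Lemma dotvBl u v w : dotv (u - v) w = dotv u w - dotv v w.
Proof. by rewrite /dotv -sumrB; apply: eq_bigr => i _; rewrite !mxE mulrBl. Qed.

Lemma dotvZl a u w : dotv (a *: u) w = a * dotv u w.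
Proof. by rewrite /dotv mulr_sumr; apply: eq_bigr => i _; rewrite !mxE mulrA. Qed.

Lemma dotvNl u w : dotv (- u) w = - dotv u w.
Proof. by rewrite -scaleN1r dotvZl mulN1r. Qed.

Lemma dotv_ge0 u : 0 <= dotv u u.
Proof. by apply: sumr_ge0 => i _; rewrite -expr2 sqr_ge0. Qed.

End Dotv.

Section ProductSpace.
Variables (R : realType) (n m : nat).
Local Notation point := ('rV[R]_n * 'rV[R]_m)%type.
Implicit Types (u v w z p : point) (S : set point).

Definition pdot u v : R := dotv u.1 v.1 + dotv u.2 v.2.

Lemma pdotC u v : pdot u v = pdot v u.
Proof. by rewrite /pdot dotvC [dotv u.2 _]dotvC. Qed.

Lemma pdotBl u v w : pdot (u - v) w = pdot u w - pdot v w.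
Proof. rewrite /pdot /= !dotvBl; ring. Qed.

Lemma pdotZl a u w : pdot (a *: u) w = a * pdot u w.
Proof. rewrite /pdot /= !dotvZl; ring. Qed.

Lemma pdotBr u v w : pdot w (u - v) = pdot w u - pdot w v.
Proof. by rewrite pdotC pdotBl ![pdot _ w]pdotC. Qed.

Lemma pdotZr a u w : pdot w (a *: u) = a * pdot w u.
Proof. by rewrite pdotC pdotZl pdotC. Qed.

Lemma pdot_ge0 u : 0 <= pdot u u.
Proof. by rewrite addr_ge0 // dotv_ge0. Qed.

Lemma pdot_subZ u v l :
  pdot (u - l *: v) (u - l *: v) = pdot u u - 2 * l * pdot u v + l ^+ 2 * pdot v v.
Proof.
rewrite !pdotBl !pdotBr !pdotZl !pdotZr [pdot v u]pdotC; ring.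
Qed.

Lemma pdot_le_sqrtM u v : pdot u v <= Num.sqrt (pdot u u) * Num.sqrt (pdot v v).
Proof.
apply: le_sqrtM_of_quadratic_ge0; rewrite ?pdot_ge0 // => l.
by rewrite -pdot_subZ pdot_ge0.
Qed.

Lemma zdistE z w : zdist z w = Num.sqrt (pdot (z - w) (z - w)).
Proof. by []. Qed.

Lemma distS_le_zdist S z w : S w -> distS S z <= zdist z w.
Proof.
move=> Sw; apply: ge_inf; last by exists w.
by exists 0 => _ [w' _ <-]; apply: sqrtr_ge0.
Qed.

Lemma le_distS S z c :
  S !=set0 -> (forall w, S w -> c <= zdist z w) -> c <= distS S z.
Proof.
move=> [w Sw] c_le; apply: lb_le_inf; first by exists (zdist z w), w.
by move=> _ [w' Sw' <-]; apply: c_le.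
Qed.

Lemma distS_ge0 S z : S !=set0 -> 0 <= distS S z.
Proof. by move=> S0; apply: le_distS => // w _; apply: sqrtr_ge0. Qed.

Lemma proj_sqr_distS S z p : is_proj S z p -> distS S z ^+ 2 = pdot (z - p) (z - p).
Proof. by move=> [_ <-]; rewrite zdistE sqr_sqrtr ?pdot_ge0. Qed.

Definition pconvex S : Prop :=
  forall w p l, S w -> S p -> 0 <= l -> l <= 1 -> S (l *: w + (1 - l) *: p).

Lemma proj_variational S z p w :
  pconvex S -> is_proj S z p -> S w -> pdot (w - p) (z - p) <= 0.
Proof.
move=> convS projp Sw; have [Sp _] := projp.
rewrite -(@ler_pM2l _ 2) // mulr0.
apply: (le0_of_le_mulr (Q := pdot (w - p) (w - p))) => l l_gt0 l_le1.
have Sl := convS w p l Sw Sp (ltW l_gt0) l_le1.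
have := distS_le_zdist z Sl.
rewrite -(ler_pXn2r (n := 2)) ?nnegrE ?sqrtr_ge0 //; last first.
  by apply: distS_ge0; exists p.
rewrite (proj_sqr_distS projp) zdistE sqr_sqrtr ?pdot_ge0 //.
have -> : z - (l *: w + (1 - l) *: p) = (z - p) - l *: (w - p).
  by rewrite scalerBl scale1r scalerBr addrCA opprD addrA.
rewrite pdot_subZ [pdot _ (w - p)]pdotC => ineq.
have : l * (2 * pdot (w - p) (z - p)) <= l * (l * pdot (w - p) (w - p)) by lra.
by rewrite ler_pM2l.
Qed.

Lemma proj_step_bound S z p g t : pconvex S -> is_proj S z p ->
  pdot (z - p) (z - p) - t * pdot g (z - p) <= distS S (z - t *: g) * distS S z.
Proof.
move=> convS projp; have [Sp _] := projp.
set c := _ - _; set D := distS S z.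
have D_ge0 : 0 <= D by apply: distS_ge0; exists p.
have DE : D = Num.sqrt (pdot (z - p) (z - p)).
  by rewrite -(proj_sqr_distS projp) sqrtr_sqr ger0_norm.
have c_le w : S w -> c <= zdist (z - t *: g) w * D.
  move=> Sw; rewrite zdistE DE; apply: le_trans (pdot_le_sqrtM _ _).
  have -> : z - t *: g - w = (z - p) - t *: g - (w - p).
    by rewrite [z - p - _]addrAC opprB addrA subrK.
  rewrite pdotBl (pdotBl (z - p)) pdotZl /c; have := proj_variational convS projp Sw; lra.
have [D0|D_neq0] := eqVneq D 0.
  by have := c_le p Sp; rewrite D0 !mulr0.
have D_gt0 : 0 < D by rewrite lt_neqAle eq_sym D_neq0.
rewrite -ler_pdivrMr //; apply: le_distS; first by exists p.
by move=> w Sw; rewrite ler_pdivrMr // c_le.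
Qed.

End ProductSpace.

Section SaddlePoints.
Variables (R : realType) (n m : nat) (F : 'rV[R]_n -> 'rV[R]_m -> R).

Lemma saddle_set_convex :
  (forall y, convex_fun (fun x => F x y)) -> (forall x, concave_fun (fun y => F x y)) ->
  pconvex (saddle_set F).
Proof.
move=> cvx ccv w p l Sw Sp l_ge0 l_le1 x y /=.
set q1 := l *: w.1 + _; set q2 := l *: w.2 + _.
have Fwp : F w.1 w.2 = F p.1 p.2.
  have [? ?] := Sw p.1 p.2; have [? ?] := Sp w.1 w.2; lra.
have l'_ge0 : 0 <= 1 - l by lra.
have le_val y' : F q1 y' <= F p.1 p.2.
  apply: le_trans (cvx y' w.1 p.1 l l_ge0 l_le1) _.
  have [? _] := Sw x y'; have [? _] := Sp x y'; nra.
have val_le x' : F p.1 p.2 <= F x' q2.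
  apply: le_trans _ (ccv x' w.2 p.2 l l_ge0 l_le1).
  have [_ ?] := Sw x' y; have [_ ?] := Sp x' y; nra.
have Fq : F q1 q2 = F p.1 p.2 by apply/eqP; rewrite eq_le le_val val_le.
by rewrite Fq le_val val_le.
Qed.

Definition saddle_field (z : 'rV[R]_n * 'rV[R]_m) : 'rV[R]_n * 'rV[R]_m :=
  (gradx F z.1 z.2, - grady F z.1 z.2).

Lemma gda_stepE t z : gda_step F t z = z - t *: saddle_field z.
Proof. by rewrite /gda_step /saddle_field; congr pair; rewrite /= scalerN opprK. Qed.

Lemma pdot_saddle_field z p : pdot (saddle_field z) (z - p) =
  dotv (gradx F z.1 z.2) (z.1 - p.1) - dotv (grady F z.1 z.2) (z.2 - p.2).
Proof. by rewrite /pdot dotvNl. Qed.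

End SaddlePoints.

Theorem theorem3p4 (R : realType) (n m : nat) (Lx Ly Lxy t : R)
  (F : 'rV[R]_n -> 'rV[R]_m -> R) :
  0 < Lx -> 0 < Ly -> 0 <= Lxy ->
  in_class_F Lx Ly Lxy F ->
  (exists w, saddle_set F w) ->
  0 < t ->
  (exists alpha : R, 0 <= alpha /\ alpha < 1 /\
     forall z : 'rV[R]_n * 'rV[R]_m,
       (distS (saddle_set F) (gda_step F t z)) ^+ 2
         <= alpha * (distS (saddle_set F) z) ^+ 2) ->
  exists mu : R, 0 < mu /\ quad_grad_growth F mu.
Proof.
move=> _ _ _ [_ [cvx [ccv _]]] S0 t_gt0 [al [al_ge0 [al_lt1 contract]]].
set s := Num.sqrt al.
have s_lt1 : s < 1 by rewrite /s -sqrtr1 ltr_sqrt.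
exists ((1 - s) / t); split; first by rewrite divr_gt0 // subr_gt0.
move=> z p projp; set S := saddle_set F in projp *.
have := proj_step_bound (saddle_field F z) t (saddle_set_convex cvx ccv) projp.
rewrite -gda_stepE pdot_saddle_field -(proj_sqr_distS projp).
set D := distS S z; set D' := distS S (gda_step F t z).
have D_ge0 : 0 <= D by apply: distS_ge0.
have D'_le : D' <= s * D.
  rewrite -[D']ger0_norm ?distS_ge0 // -sqrtr_sqr -[D]ger0_norm // -sqrtr_sqr.
  by rewrite -sqrtrM // ler_sqrt ?mulr_ge0 // contract.
have D'D_le : D' * D <= s * D ^+ 2 by rewrite expr2 mulrA ler_wpM2r.
rewrite mulrAC ler_pdivrMr // mulrC; lra.
Qed.
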